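(* Let $\mathbf p=(p_1,p_2)^T\in\mathbb{Z}^2\setminus\{\mathbf 0\}$ with $\mathbf p\notin\{(\pm1,0)^T,(0,\pm1)^T,(\pm1,\pm1)^T,(\pm1,\pm2)^T,(\pm2,\pm1)^T\}$. (Galerkin) Then there exists $\mathbf a\in\mathbb{Z}^2$ such that, with $\rho_k=\frac1{|\mathbf p|^2}-\frac1{|\mathbf a+k\mathbf p|^2}$, one has $\rho_0<0$ (i.e. $|\mathbf a|<|\mathbf p|$), $\rho_k>0$ for all $k\in\mathbb{Z}\setminus\{0\}$, and $\rho_0+\rho_2<0$ or $\rho_0+\rho_{-2}<0$; in particular, for every positive integer $N$ large enough that $\mathbf a\pm2\mathbf p\in[-N,N]^2$, $\sqrt{-\rho_1(\rho_0+\rho_2)}$ or $\sqrt{-\rho_{-1}(\rho_0+\rho_{-2})}$ is a positive real number and all $\rho_k$ with $\mathbf a+k\mathbf p\in[-N,N]^2$, $k\neq0$, are positive. (Zeitlin) If moreover $\kappa=\gcd(|p_1|,|p_2|)$ is odd, then there exist $\mathbf a\in\mathbb{Z}^2$ and infinitely many (arbitrarily large) positive integers $N$ such that, with $\mathcal D=[-N,N]^2\cap\mathbb{Z}^2$, $\widehat{\mathbf k}$ the element of $\mathcal D$ congruent to $\mathbf k$ modulo $(2N+1)\mathbb{Z}^2$, $n=|\{\widehat{\mathbf a+k\mathbf p}:k\in\mathbb{Z}\}|$ and $\rho_k=\frac1{|\mathbf p|^2}-\frac1{|\widehat{\mathbf a+k\mathbf p}|^2}$, one has $\rho_0<0$,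 $\rho_k>0$ for $k=1,\dots,n-1$, and $\rho_0+\rho_2<0$ or $\rho_0+\rho_{n-2}<0$.
   Context: These are the conditions under which the class of Fourier modes $\{\mathbf a+k\mathbf p\}$ has exactly one mode strictly inside the disc $\{|\mathbf x|<|\mathbf p|\}$ and the explicit lower bound $\sqrt{-\rho_1(\rho_0+\rho_2)}$ (or $\sqrt{-\rho_{-1}(\rho_0+\rho_{-2})}$, resp. $\sqrt{-\rho_{n-1}(\rho_0+\rho_{n-2})}$) for a real eigenvalue of the linearised class matrix is real and positive. *)

From HB Require Import structures.
From mathcomp Require Import all_boot all_order all_algebra.
From mathcomp Require Import finmap.
From mathcomp Require Import boolp classical_sets cardinality.
Set Implicit Arguments. Unset Strict Implicit. Unset Printing Implicit Defensive.
Import Order.TTheory GRing.Theory Num.Theory.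
Local Open Scope ring_scope.

Definition zvec := (int * int)%type.
Definition vadd (x y : zvec) : zvec := (x.1 + y.1, x.2 + y.2).
Definition vscale (k : int) (x : zvec) : zvec := (k * x.1, k * x.2).
Definition aff (a p : zvec) (k : int) : zvec := vadd a (vscale k p).
Definition nrm2 (x : zvec) : int := x.1 ^+ 2 + x.2 ^+ 2.

Definition rho (R : rcfType) (p x : zvec) : R :=
  ((nrm2 p)%:~R)^-1 - ((nrm2 x)%:~R)^-1.

Definition in_box (N : nat) (x : zvec) : Prop :=
  (- (N%:Z) <= x.1 <= N%:Z) /\ (- (N%:Z) <= x.2 <= N%:Z).

(* the representative in [-N,N] of z modulo 2N+1 *)
Definition hatc (N : nat) (z : int) : int :=
  ((z + N%:Z) %% (2 * N + 1)%:Z)%Z - N%:Z.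
Definition hat (N : nat) (x : zvec) : zvec := (hatc N x.1, hatc N x.2).

Definition orbit_size (N : nat) (a p : zvec) : nat :=
  #|` fset_set [set hat N (aff a p k) | k in [set: int]] |%fset.

Definition excluded_p (p : zvec) : bool :=
  ((`|p.1|%N, `|p.2|%N) \in [:: (0,0); (1,0); (0,1); (1,1); (1,2); (2,1)]%N).

(* Pick [a] with [0 < |a|^2], [2 |a.p| < |a|^2] and [2 |a|^2 <= |p|^2].  Then
   [|a + k p|^2 = |a|^2 + 2 k a.p + k^2 |p|^2 > |p|^2] for every [k <> 0], and
   [1/|a|^2 >= 2/|p|^2] makes [rho_0 + rho_k] negative.  For large [p] such an [a] is
   the half of [p] rotated by a right angle, rounded towards zero; the finitely many
   small [p] are checked by enumeration.

   For the truncation take [2N+1 = kappa M] with [kappa = gcd(p)] and [M] large, so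
   that [hat(a + k p) = a + k p - (2N+1) w].  If this point lay in the closed disc of
   radius [|p|], its cross product with [p] and that of [a] would both be at most
   [|p|^2 < (2N+1)/2] in absolute value, forcing [w x p = 0]; by Bezout [kappa w] is
   then a multiple [t p], so [hat(a + k p) = a + (k - M t) p] with [k - M t <> 0] when
   [0 < k < M], contradicting the first part.  The orbit has period [M], hence at most
   [M] points. *)

From HB Require Import structures.
From mathcomp Require Import all_boot all_order all_algebra.
From mathcomp Require Import finmap.
From mathcomp Require Import boolp classical_sets cardinality.
From mathcomp Require Import zify ring lra.
Import Order.TTheory GRing.Theory Num.Theory.
Local Open Scope ring_scope.
Set Implicit Arguments. Unset Strict Implicit.

Definition dot (x y : zvec) : int := x.1 * y.1 + x.2 * y.2.
Definition cross (x y : zvec) : int := x.1 * y.2 - x.2 * y.1.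

Lemma nrm2_aff (a p : zvec) (k : int) :
  nrm2 (aff a p k) = nrm2 a + 2 * k * dot a p + k ^+ 2 * nrm2 p.
Proof. rewrite /nrm2 /aff /vadd /vscale /dot /=; ring. Qed.

Lemma abs_cross_le (x y : zvec) : nrm2 x <= nrm2 y -> `|cross x y| <= nrm2 y.
Proof.
move=> hxy.
have hy : 0 <= nrm2 y by rewrite addr_ge0 ?sqr_ge0.
have lagrange : cross x y ^+ 2 + dot x y ^+ 2 = nrm2 x * nrm2 y.
  by rewrite /cross /dot /nrm2; ring.
rewrite -(ler_sqr (normr_ge0 _) hy) real_normK ?num_real //.
have := sqr_ge0 (dot x y); have : nrm2 x * nrm2 y <= nrm2 y * nrm2 y by rewrite ler_wpM2r.
rewrite -!expr2; lia.
Qed.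

Lemma nrm2_lt_shift (A d P k : int) : 0 < A -> 2 * `|d| < A -> 2 * A <= P -> k != 0 ->
  P < A + 2 * k * d + k ^+ 2 * P.
Proof.
move=> hA hd hP hk.
have hK : 1 <= `|k| by lia.
have hkd : `|2 * k * d| < `|k| * A.
  by rewrite -mulrA mulrCA normrM ltr_pM2l ?normr_gt0 // normrM; lia.
have hsq : (`|k| ^+ 2 - 1) * (2 * A) <= (`|k| ^+ 2 - 1) * P.
  by rewrite ler_wpM2l // subr_ge0 exprn_ege1.
(* [A + 2kd + (k^2 - 1) P > A (1 - |k| + 2 (k^2 - 1)) = A (2|k| + 1)(|k| - 1) >= 0] *)
have hpos : 0 <= (2 * `|k| + 1) * (`|k| - 1) * A by rewrite !mulr_ge0 //; lia.
have ek : k ^+ 2 = `|k| ^+ 2 by rewrite real_normK ?num_real.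
have := ler_normr (2 * k * d) (- (2 * k * d)).
rewrite ek; rewrite !expr2 in hsq hpos *; lia.
Qed.

Definition good_base (a p : zvec) : bool :=
  [&& 0 < nrm2 a, 2 * `|dot a p| < nrm2 a & 2 * nrm2 a <= nrm2 p].

Lemma good_base_nrm2_aff_gt (a p : zvec) (k : int) : good_base a p -> k != 0 ->
  nrm2 p < nrm2 (aff a p k).
Proof. by case/and3P=> hA hd hP hk; rewrite nrm2_aff nrm2_lt_shift. Qed.

Lemma good_base_small (p : zvec) : ~~ excluded_p p -> `|p.1| <= 5 -> `|p.2| <= 5 ->
  exists a, good_base a p.
Proof.
pose window n : seq int := [seq i%:Z - n%:Z | i <- iota 0 (2 * n).+1].
have window_all : all (fun p1 => all (fun p2 =>
    excluded_p (p1, p2) ||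
    has (good_base ^~ (p1, p2)) [seq (x, y) | x <- window 3%N, y <- window 3%N])
    (window 5%N)) (window 5%N).
  by vm_compute.
have mem_window x : `|x| <= 5 -> x \in window 5%N.
  move=> hx; apply/mapP; exists (absz (x + 5)); first by rewrite mem_iota; lia.
  lia.
case: p => p1 p2 hp h1 h2.
move/allP/(_ _ (mem_window _ h1))/allP/(_ _ (mem_window _ h2)): window_all.
by rewrite (negbTE hp) => /hasP [a _ ha]; exists a.
Qed.

Lemma twice_abs_dot_lt (h1 h2 t1 t2 : int) : `|t1| <= 1 -> `|t2| <= 1 ->
  3 <= `|h1| \/ 3 <= `|h2| -> 2 * `|h1 * t1 + h2 * t2| < h1 ^+ 2 + h2 ^+ 2.
Proof.
move=> ht1 ht2 hh.
have le_abs : `|h1 * t1 + h2 * t2| <= `|h1| + `|h2|.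
  by rewrite (le_trans (ler_normD _ _)) // lerD // normrM ler_piMr.
have sq_gt (u v : int) : 0 <= v -> 3 <= u -> 2 * u + 2 * v + 1 < u ^+ 2 + v ^+ 2.
  move=> hv hu; have : 3 * u <= u * u by rewrite ler_pM2r //; lia.
  have : 0 <= (v - 1) ^+ 2 by rewrite sqr_ge0.
  by rewrite !expr2; lia.
rewrite -(real_normK (num_real h1)) -(real_normK (num_real h2)).
by case: hh => h; [have := sq_gt _ _ (normr_ge0 h2) h | have := sq_gt _ _ (normr_ge0 h1) h];
  lia.
Qed.

Lemma halve_toward_zero (x : int) :
  exists h e : int, [/\ x = 2 * h + e, `|e| <= 1 & 0 <= h * e].
Proof.
have := divz_eq x 2; have : 0 <= (x %% 2)%Z < 2 by lia.
move: (x %/ 2)%Z (x %% 2)%Z => q r hr ex.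
have [r0|r1] : r = 0 \/ r = 1 by lia.
  by exists q, 0; rewrite mulr0; split; lia.
case: (lerP 0 x) => hx.
  by exists q, 1; rewrite mulr1; split; lia.
by exists (q + 1), (-1); rewrite mulrN1; split; lia.
Qed.

Lemma good_base_large (p : zvec) : 6 <= `|p.1| \/ 6 <= `|p.2| -> exists a, good_base a p.
Proof.
case: p => p1 p2 /= hp.
have [h1 [e1 [E1 B1 S1]]] := halve_toward_zero p1.
have [h2 [e2 [E2 B2 S2]]] := halve_toward_zero p2.
have hh : 3 <= `|h1| \/ 3 <= `|h2| by lia.
exists (- h2, h1); rewrite /good_base /nrm2 /dot /= sqrrN [_ + h1 ^+ 2]addrC.
have -> : - h2 * p1 + h1 * p2 = h1 * e2 + h2 * - e1 by rewrite E1 E2; ring.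
apply/and3P; split.
- by have := @twice_abs_dot_lt h1 h2 0 0 isT isT hh; lia.
- by apply: twice_abs_dot_lt; rewrite ?normrN.
- have -> : p1 ^+ 2 + p2 ^+ 2 = 4 * (h1 ^+ 2 + h2 ^+ 2) + 4 * (h1 * e1 + h2 * e2)
      + e1 ^+ 2 + e2 ^+ 2 by rewrite E1 E2; ring.
  have := sqr_ge0 h1; have := sqr_ge0 h2; have := sqr_ge0 e1; have := sqr_ge0 e2.
  by clear -S1 S2; lia.
Qed.

Lemma good_base_exists (p : zvec) : ~~ excluded_p p -> exists a, good_base a p.
Proof.
move=> hp; have [small | large] : (`|p.1| <= 5) && (`|p.2| <= 5) \/ 6 <= `|p.1| \/ 6 <= `|p.2|.
- by lia.
- by case/andP: small; apply: good_base_small.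
- exact: good_base_large.
Qed.

Lemma rho_gt0 (R : rcfType) (p x : zvec) : 0 < nrm2 p -> nrm2 p < nrm2 x -> 0 < rho R p x.
Proof.
by move=> hp hpx; rewrite subr_gt0 ltf_pV2 ?ltr_int // posrE ltr0z // (lt_trans hp).
Qed.

Lemma rho_lt0 (R : rcfType) (p x : zvec) : 0 < nrm2 x -> nrm2 x < nrm2 p -> rho R p x < 0.
Proof.
by move=> hx hxp; rewrite subr_lt0 ltf_pV2 ?ltr_int // posrE ltr0z // (lt_trans hx).
Qed.

Lemma rho_add_lt0 (R : rcfType) (p a x : zvec) :
  0 < nrm2 a -> 2 * nrm2 a <= nrm2 p -> 0 < nrm2 x -> rho R p a + rho R p x < 0.
Proof.
move=> ha hap hx; rewrite /rho.
set A : R := (nrm2 a)%:~R; set P : R := (nrm2 p)%:~R.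
have hA : 0 < A by rewrite ltr0z.
have hP : 0 < P by rewrite ltr0z; lia.
have h2P : 2 / P <= A^-1.
  by rewrite ler_pdivrMr // mulrC ler_pdivlMr // -[2]/(2%:~R) -intrM ler_int.
have : 0 < ((nrm2 x)%:~R : R)^-1 by rewrite invr_gt0 ltr0z.
lra.
Qed.

Lemma hatc_id (N : nat) (z : int) : `|z| <= N%:Z -> hatc N z = z.
Proof. by move=> hz; rewrite /hatc modz_small; lia. Qed.

Lemma hatcE (N : nat) (z : int) :
  hatc N z = z - (2 * N + 1)%:Z * ((z + N%:Z) %/ (2 * N + 1)%:Z)%Z.
Proof. by rewrite /hatc; have := divz_eq (z + N%:Z) (2 * N + 1)%:Z; lia. Qed.

Lemma hatc_addMr (N : nat) (z t : int) : hatc N (z + (2 * N + 1)%:Z * t) = hatc N z.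
Proof. by rewrite /hatc (addrAC z) (mulrC _ t) (addrC (z + _)) modzMDl. Qed.

Lemma hat_id (N : nat) (x : zvec) : `|x.1| <= N%:Z -> `|x.2| <= N%:Z -> hat N x = x.
Proof. by case: x => x1 x2 h1 h2; rewrite /hat !hatc_id. Qed.

Lemma cross_eq0_of_short_shift (a p w : zvec) (k m : int) :
  nrm2 a <= nrm2 p -> 2 * nrm2 p < m ->
  nrm2 (a.1 + k * p.1 - m * w.1, a.2 + k * p.2 - m * w.2) <= nrm2 p -> cross w p = 0.
Proof.
set x := (_, _) => hap hm hxp.
have := abs_cross_le hap; have := abs_cross_le hxp => hxc hac.
have ecross : m * cross w p = cross a p - cross x p by rewrite /cross /=; ring.
have hm0 : 0 < m by lia.
have : `|m * cross w p| < m * 1 by rewrite ecross (le_lt_trans (ler_normB _ _)) //; lia.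
by rewrite normrM gtr0_norm // ltr_pM2l //; lia.
Qed.

Lemma gcdz_scale_parallel (w p : zvec) : cross w p = 0 ->
  exists t, gcdz p.1 p.2 * w.1 = t * p.1 /\ gcdz p.1 p.2 * w.2 = t * p.2.
Proof.
move=> hc; have [u [v huv]] := Bezoutz p.1 p.2.
exists (u * w.1 + v * w.2); rewrite -huv; split.
- have -> : (u * p.1 + v * p.2) * w.1 = (u * w.1 + v * w.2) * p.1 + v * cross w p.
    by rewrite /cross; ring.
  by rewrite hc mulr0 addr0.
- have -> : (u * p.1 + v * p.2) * w.2 = (u * w.1 + v * w.2) * p.2 - u * cross w p.
    by rewrite /cross; ring.
  by rewrite hc mulr0 subr0.
Qed.

Lemma hat_aff_addMr (N M : nat) (a p : zvec) (k t : int) :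
  (2 * N + 1 = gcdn `|p.1| `|p.2| * M)%N ->
  hat N (aff a p (k + M%:Z * t)) = hat N (aff a p k).
Proof.
move=> hNM; set g := gcdz p.1 p.2.
have hm : (2 * N + 1)%:Z = g * M%:Z by rewrite hNM PoszM.
have shift (c e : int) : (g %| e)%Z ->
    hatc N (c + (k + M%:Z * t) * e) = hatc N (c + k * e).
  move=> /divzK; move: (e %/ g)%Z => q <-.
  by rewrite -[RHS](hatc_addMr N _ (t * q)) hm; congr hatc; ring.
by rewrite /hat /aff /vadd /vscale /= !shift ?dvdz_gcdl ?dvdz_gcdr.
Qed.

Section CardImage.
Local Open Scope classical_set_scope.

Lemma card_image_periodic (T : choiceType) (f : int -> T) (M : nat) : (0 < M)%N ->
  (forall k t, f (k + M%:Z * t) = f k) ->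
  (#|` fset_set [set f k | k in [set: int]]| <= M)%N.
Proof.
move=> hM hf.
have -> : [set f k | k in [set: int]] = [set` [fset x in [seq f i%:Z | i <- iota 0 M]]%fset].
  apply/seteqP; split => x /=.
  - case=> k _ <-; rewrite (divz_eq k M) addrC mulrC hf.
    rewrite inE; apply/mapP; exists (absz (k %% M)%Z); first by rewrite mem_iota; lia.
    by rewrite gez0_abs //; lia.
  - by rewrite inE => /mapP [i _ ->]; exists i%:Z.
by rewrite set_fsetK card_fseq (leq_trans (size_undup _)) // size_map size_iota.
Qed.
End CardImage.

Lemma orbit_size_le (N M : nat) (a p : zvec) : (2 * N + 1 = gcdn `|p.1| `|p.2| * M)%N ->
  (orbit_size N a p <= M)%N.
Proof.
move=> hNM; apply: card_image_periodic => [|k t]; last exact: hat_aff_addMr.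
by move: hNM; case: M => //; rewrite muln0 addn1.
Qed.

Lemma nrm2_hat_aff_gt (N M : nat) (a p : zvec) (k : int) : good_base a p ->
  (2 * N + 1 = gcdn `|p.1| `|p.2| * M)%N -> 2 * nrm2 p < (2 * N + 1)%:Z ->
  0 < k < M%:Z -> nrm2 p < nrm2 (hat N (aff a p k)).
Proof.
move=> ha hNM hm hk; rewrite ltNge; apply/negP => hle.
set m := (2 * N + 1)%:Z in hm.
set w := (((a.1 + k * p.1 + N%:Z) %/ m)%Z, ((a.2 + k * p.2 + N%:Z) %/ m)%Z).
have ehat : hat N (aff a p k) = (a.1 + k * p.1 - m * w.1, a.2 + k * p.2 - m * w.2).
  by rewrite /hat /= !hatcE.
have hap : nrm2 a <= nrm2 p by case/and3P: ha; lia.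
rewrite ehat in hle.
have [t [ht1 ht2]] := gcdz_scale_parallel (cross_eq0_of_short_shift hap hm hle).
have hm' : m = gcdz p.1 p.2 * M%:Z by rewrite /m hNM PoszM.
have scaled_w (wi pi : int) : gcdz p.1 p.2 * wi = t * pi -> m * wi = M%:Z * t * pi.
  by rewrite hm' => h; rewrite mulrAC h; ring.
have eshift : (a.1 + k * p.1 - m * w.1, a.2 + k * p.2 - m * w.2) = aff a p (k - M%:Z * t).
  by rewrite /aff /vadd /vscale /= (scaled_w _ _ ht1) (scaled_w _ _ ht2); congr pair; ring.
have hk0 : k - M%:Z * t != 0.
  have [t_le0 | t_gt0] := lerP t 0.
    by have := mulr_ge0_le0 (ler0n _ M) t_le0; lia.
  have : M%:Z <= M%:Z * t by rewrite ler_peMr //; lia.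
  lia.
by have := good_base_nrm2_aff_gt ha hk0; rewrite -eshift; lia.
Qed.

Lemma odd_divides_large_modulus (g L : nat) : odd g ->
  exists N M : nat, (L <= N)%N /\ (2 * N + 1 = g * M)%N.
Proof.
move=> hg; exists (g * L + g./2)%N, (2 * L + 1)%N; split.
- by rewrite (leq_trans _ (leq_addr _ _)) // leq_pmull //; case: g hg.
- by rewrite -[g in RHS]odd_double_half hg; lia.
Qed.

Theorem lemma7 (R : rcfType) (p : zvec) (hp : ~~ excluded_p p) :
  (* Galerkin *)
  (exists a : zvec,
     rho R p (aff a p 0) < 0 /\
     (forall k : int, k != 0 -> 0 < rho R p (aff a p k)) /\
     (rho R p (aff a p 0) + rho R p (aff a p 2) < 0 \/
      rho R p (aff a p 0) + rho R p (aff a p (-2)) < 0) /\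
     (forall N : nat, (0 < N)%N ->
        in_box N (aff a p 2) -> in_box N (aff a p (-2)) ->
        (0 < Num.sqrt (- (rho R p (aff a p 1) *
                          (rho R p (aff a p 0) + rho R p (aff a p 2)))) \/
         0 < Num.sqrt (- (rho R p (aff a p (-1)) *
                          (rho R p (aff a p 0) + rho R p (aff a p (-2)))))) /\
        (forall k : int, k != 0 -> in_box N (aff a p k) ->
           0 < rho R p (aff a p k)))) /\
  (* Zeitlin *)
  (odd (gcdn `|p.1| `|p.2|) ->
   exists a : zvec, forall M : nat, exists N : nat,
     (M <= N)%N /\ (0 < N)%N /\
     let n := orbit_size N a p in
     let rhoZ (k : int) := rho R p (hat N (aff a p k)) in
     rhoZ 0 < 0 /\
     (forall k : nat, (1 <= k)%N -> (k <= n - 1)%N -> 0 < rhoZ k%:Z) /\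
     (rhoZ 0 + rhoZ 2 < 0 \/ rhoZ 0 + rhoZ (n%:Z - 2) < 0)).
Proof.
have [a ha] := good_base_exists hp; have /and3P[hA _ hAP] := ha.
have hP : 0 < nrm2 p by lia.
have nrm2_aff0 : nrm2 (aff a p 0) = nrm2 a by rewrite nrm2_aff; ring.
have rho0_lt0 : rho R p (aff a p 0) < 0 by apply: rho_lt0; rewrite nrm2_aff0 //; lia.
have rho_aff_gt0 k : k != 0 -> 0 < rho R p (aff a p k).
  by move=> hk; apply: rho_gt0 => //; apply: good_base_nrm2_aff_gt.
have rho02_lt0 : rho R p (aff a p 0) + rho R p (aff a p 2) < 0.
  by rewrite rho_add_lt0 ?nrm2_aff0 //; have := @good_base_nrm2_aff_gt _ _ 2 ha isT; lia.
split.
  exists a; do 3 split => //; first by left.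
  move=> N _ _ _; split=> [|k hk _]; last exact: rho_aff_gt0.
  by left; rewrite sqrtr_gt0 -mulrN mulr_gt0 ?oppr_gt0 ?rho_aff_gt0.
move=> hodd; exists a => L.
have [N [M [hN hNM]]] := odd_divides_large_modulus
  (L + absz (nrm2 p) + absz a.1 + absz a.2 + 2 * absz p.1 + 2 * absz p.2) hodd.
exists N; split; [lia | split; [lia | move=> n rhoZ]].
have hm : 2 * nrm2 p < (2 * N + 1)%:Z by lia.
have hn : (n <= M)%N := orbit_size_le a hNM.
have [hat0 hat2] : hat N (aff a p 0) = aff a p 0 /\ hat N (aff a p 2) = aff a p 2.
  by split; apply: hat_id; rewrite /aff /vadd /vscale /=; lia.
rewrite /rhoZ hat0 hat2; do 2 split => //; last by left.
move=> k hk1 hkn; apply: rho_gt0 => //.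
by apply: (nrm2_hat_aff_gt ha hNM hm); lia.
Qed.
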